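(* For every admissible policy $\pi$ and every $T\ge1$, $$\mathcal R(\pi,T)-\tilde{\mathcal R}(\pi,T)\le G_T(\pi)+G_T(\pi^*(T)),$$ $$\mathcal R(\pi,T)-\tilde{\mathcal R}(\pi,T)\ge-\bigl(G_T(\pi)+G_T(\pi_{p^*})+\tilde{\mathcal R}(\pi_{p^*},T)\bigr),$$ where $G_T(\pi)=\bigl|\mathbb E[\mathcal U(\hat F^\pi_T)-\mathcal U(\tilde F^\pi_T)]\bigr|$.
   Context: Bandit setting: $K\ge1$, $\mathbb K=\{1,\dots,K\}$; arm $i$ produces i.i.d. rewards $X^{(i)}_1,X^{(i)}_2,\dots$ with distribution function $F^{(i)}$, all rewards mutually independent. An admissible policy $\pi=(\pi_1,\pi_2,\dots)$ chooses $\pi_t\in\mathbb K$ as a measurable function of a randomization variable $V$ independent of rewards and of past actions/rewards; $\tau_i(t)=\sum_{s\le t}\mathbf 1\{\pi_s=i\}$, the reward at time $t$ is $X^\pi_t=X^{(i)}_{\tau_i(t)}$ on $\{\pi_t=i\}$; $\Pi$ is the set of admissible policies. $\hat F^\pi_T(y)=\frac1T\sum_{t\le T}\mathbf 1\{X^\pi_t\le y\}$. $\Delta_{K-1}$ is the probability simplex, $F_p=\sum_ip_iF^{(i)}$, $\mathcal D^\Delta=\{F_p:p\in\Delta_{K-1}\}$. $(L,\|\cdot\|)$ is a normed space of bounded functions on $\mathbb R$ containing these distribution functions and $\mathcal U:L\to\mathbb R$. Let $\pi^*(T)\in\arg\max_{\pi\in\Pi}\mathbb E[\mathcal U(\hat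 F^\pi_T)]$ (assumed to exist) and $\mathcal R(\pi,T)=\mathbb E[\mathcal U(\hat F^{\pi^*(T)}_T)-\mathcal U(\hat F^\pi_T)]$. Let $p^*\in\arg\max_{p\in\Delta_{K-1}}\mathcal U(F_p)$ (assumed to exist), $\tilde F^\pi_T=\frac1T\sum_i\tau_i(T)F^{(i)}$ and $\tilde{\mathcal R}(\pi,T)=\mathbb E[\mathcal U(F_{p^*})-\mathcal U(\tilde F^\pi_T)]$. $\pi_{p^*}$ denotes the simple policy whose actions $\pi_1,\pi_2,\dots$ are i.i.d., $\sigma(V)$-measurable, with $\mathbb P(\pi_t=i)=p^*_i$. All expectations are assumed finite. *)

From HB Require Import structures.
From mathcomp Require Import all_boot all_order all_algebra.
From mathcomp Require Import all_classical all_reals all_analysis.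
Set Implicit Arguments. Unset Strict Implicit. Unset Printing Implicit Defensive.
Import Order.TTheory GRing.Theory Num.Theory.
Import numFieldNormedType.Exports.
Local Open Scope classical_set_scope.
Local Open Scope ring_scope.

(* Conventions:
   - arms are 'I_K;  X i n  is the reward X^{(i)}_{n+1} (0-based index);
   - a policy is a sequence  pol : nat -> Omega -> 'I_K  with  pol s = pi_{s+1};
   - tau_i(t) = #{ s < t | pol s = i }  (the number of pulls among the first t). *)

Section Bandit.
Variables (R : realType) (d : measure_display) (Omega : measurableType d).
Variable (P : probability Omega R).

Definition sigmaRV (d' : measure_display) (T' : measurableType d') (f : Omega -> T')
  : set_system Omega := [set f @^-1` B | B in [set B | measurable B]].

Definition sigmaDisc (T' : Type) (f : Omega -> T') : set_system Omega :=
  [set f @^-1` B | B in [set: set T']].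

Definition mutually_independent (I : eqType) (G : I -> set_system Omega) :=
  forall (J : seq I) (A : I -> set Omega), uniq J ->
    (forall j, j \in J -> G j (A j)) ->
    P (\big[setI/setT]_(j <- J) A j) = (\prod_(j <- J) P (A j))%E.

(* expectation of a real-valued function (meaningful when it is integrable) *)
Definition Exp (f : Omega -> R) : R := fine (\int[P]_w (f w)%:E).

Variable (K : nat).

Definition policy := nat -> Omega -> 'I_K.

Definition tau (pol : policy) (i : 'I_K) (t : nat) (w : Omega) : nat :=
  \sum_(s < t) (pol s w == i).

(* reward X^pi_{s+1} collected at (0-based) step s:
   X^{(i)}_{tau_i(s+1)} on {pi_{s+1} = i} *)
Definition Xpi (X : 'I_K -> nat -> Omega -> R) (pol : policy) (s : nat) (w : Omega) : R :=
  X (pol s w) (tau pol (pol s w) s w) w.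

Definition Fhat (X : 'I_K -> nat -> Omega -> R) (pol : policy) (T : nat) (w : Omega)
  : R -> R := fun y => T%:R^-1 * \sum_(s < T) ((Xpi X pol s w <= y)%R : nat)%:R.

Definition Ftilde (F : 'I_K -> R -> R) (pol : policy) (T : nat) (w : Omega)
  : R -> R := fun y => T%:R^-1 * \sum_(i < K) (tau pol i T w)%:R * F i y.

Definition Fmix (F : 'I_K -> R -> R) (p : 'I_K -> R) : R -> R :=
  fun y => \sum_(i < K) p i * F i y.

Definition in_simplex (p : 'I_K -> R) : Prop :=
  (forall i, 0 <= p i) /\ \sum_(i < K) p i = 1.

Definition history_generators (d' : measure_display) (TV : measurableType d')
  (V : Omega -> TV) (X : 'I_K -> nat -> Omega -> R) (pol : policy) (s : nat)
  : set_system Omega :=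
  sigmaRV V
  `|` [set A | exists2 r, (r < s)%N & sigmaDisc (pol r) A]
  `|` [set A | exists2 r, (r < s)%N & sigmaRV (Xpi X pol r) A].

Definition admissible (d' : measure_display) (TV : measurableType d')
  (V : Omega -> TV) (X : 'I_K -> nat -> Omega -> R) (pol : policy) : Prop :=
  forall s (i : 'I_K), <<s history_generators V X pol s >> (pol s @^-1` [set i]).

Definition regret (X : 'I_K -> nat -> Omega -> R) (U : (R -> R) -> R)
  (pistar : nat -> policy) (pol : policy) (T : nat) : R :=
  Exp (fun w => U (Fhat X (pistar T) T w) - U (Fhat X pol T w)).

Definition regret_tilde (F : 'I_K -> R -> R) (U : (R -> R) -> R)
  (pstar : 'I_K -> R) (pol : policy) (T : nat) : R :=
  Exp (fun w => U (Fmix F pstar) - U (Ftilde F pol T w)).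

Definition GT (X : 'I_K -> nat -> Omega -> R) (F : 'I_K -> R -> R)
  (U : (R -> R) -> R) (pol : policy) (T : nat) : R :=
  `| Exp (fun w => U (Fhat X pol T w) - U (Ftilde F pol T w)) |.

End Bandit.

From HB Require Import structures.
From mathcomp Require Import all_boot all_order all_algebra.
From mathcomp Require Import all_classical all_reals all_analysis.
From mathcomp Require Import lra.
Set Implicit Arguments. Unset Strict Implicit. Unset Printing Implicit Defensive.
Import Order.TTheory GRing.Theory Num.Theory.
Import numFieldNormedType.Exports.
Local Open Scope classical_set_scope.
Local Open Scope ring_scope.

(* Write a = E U(F^_{pi^*(T)}), b = E U(F^_pi), c = U(F_{p^*}) and e = E U(F~_pi),
   so that R - R~ = (a - b) - (c - e).  For every policy, F~_T is the mixture F_p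
   with p_i = tau_i(T)/T, hence U(F~_T) <= c pointwise; replacing F^ by F~ for
   pi^*(T) costs G_T(pi^*(T)) and gives the upper bound.  For the lower bound,
   pi_{p^*} is admissible (its actions depend on V only), so a >= E U(F^_{pi_{p^*}}),
   which is c - R~(pi_{p^*}) up to G_T(pi_{p^*}).  In both bounds b - e costs G_T(pi). *)

Section Expectation.
Variables (R : realType) (d : measure_display) (Omega : measurableType d).
Variable P : probability Omega R.

Lemma ExpB (f g : Omega -> R) :
  P.-integrable setT (fun w => (f w)%:E) -> P.-integrable setT (fun w => (g w)%:E) ->
  Exp P (fun w => f w - g w) = Exp P f - Exp P g.
Proof.
move=> f_int g_int; rewrite /Exp integralB_EFin // fineB //.
- exact: integrable_fin_num f_int.
- exact: integrable_fin_num g_int.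
Qed.

Lemma Exp_cst (c : R) : Exp P (fun=> c) = c.
Proof. by rewrite /Exp integral_cst //= probability_setT mule1. Qed.

Lemma Exp_le_cst (f : Omega -> R) (c : R) :
  P.-integrable setT (fun w => (f w)%:E) -> (forall w, f w <= c) -> Exp P f <= c.
Proof.
move=> f_int f_le; rewrite -[leRHS]Exp_cst /Exp.
have c_int := finite_measure_integrable_cst P c measurableT.
apply: fine_le; [exact: integrable_fin_num f_int|exact: integrable_fin_num c_int|].
by apply: le_integral => // w _; rewrite lee_fin.
Qed.

End Expectation.

Section MeanField.
Variables (R : realType) (d : measure_display) (Omega : measurableType d).
Variables (K : nat) (F : 'I_K -> R -> R).

Definition frequency (pol : policy Omega K) (T : nat) (w : Omega) (i : 'I_K) : R :=
  T%:R^-1 * (tau pol i T w)%:R.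

Lemma sum_tau (pol : policy Omega K) (T : nat) (w : Omega) :
  (\sum_(i < K) tau pol i T w)%N = T.
Proof.
rewrite /tau exchange_big /= -[RHS]card_ord -sum1_card.
apply: eq_bigr => s _; rewrite (bigD1 (pol s w)) //= eqxx big1 // => i.
by rewrite eq_sym => /negbTE ->.
Qed.

Lemma frequency_in_simplex (pol : policy Omega K) (T : nat) (w : Omega) :
  (0 < T)%N -> in_simplex (frequency pol T w).
Proof.
move=> T_gt0; split=> [i|]; first by rewrite mulr_ge0 ?invr_ge0 ?ler0n.
by rewrite -mulr_sumr -natr_sum sum_tau mulVf // pnatr_eq0 -lt0n.
Qed.

Lemma Ftilde_Fmix (pol : policy Omega K) (T : nat) (w : Omega) :
  Ftilde F pol T w = Fmix F (frequency pol T w).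
Proof.
by apply: funext => y; rewrite /Ftilde /Fmix mulr_sumr; under eq_bigr do rewrite mulrA.
Qed.

Lemma U_Ftilde_le_max (U : (R -> R) -> R) (pstar : 'I_K -> R)
    (pol : policy Omega K) (T : nat) (w : Omega) :
  (forall p, in_simplex p -> U (Fmix F p) <= U (Fmix F pstar)) -> (0 < T)%N ->
  U (Ftilde F pol T w) <= U (Fmix F pstar).
Proof. by move=> pstar_max T_gt0; rewrite Ftilde_Fmix; exact/pstar_max/frequency_in_simplex. Qed.

End MeanField.

Lemma admissible_of_sigmaV (R : realType) (d : measure_display) (Omega : measurableType d)
    (K : nat) (dV : measure_display) (TV : measurableType dV) (V : Omega -> TV)
    (X : 'I_K -> nat -> Omega -> R) (pol : policy Omega K) :
  (forall s (B : set 'I_K), sigmaRV V (pol s @^-1` B)) -> admissible V X pol.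
Proof. by move=> pol_V s i; apply: sub_gen_smallest; do 2 left; exact: pol_V. Qed.

Section RegretGap.
Variable R : realDomainType.

Lemma regret_gap_le (a b c e f : R) :
  f <= c -> (a - b) - (c - e) <= `|b - e| + `|a - f|.
Proof.
move=> le_fc; have := ler_norm (a - f).
have := ler_norm (e - b); rewrite distrC; lra.
Qed.

Lemma regret_gap_ge (a b c e g h : R) :
  h <= a -> - (`|b - e| + `|h - g| + (c - g)) <= (a - b) - (c - e).
Proof.
move=> le_ha; have := ler_norm (b - e).
have := ler_norm (g - h); rewrite distrC; lra.
Qed.

End RegretGap.

Theorem lemma16
  (R : realType) (d : measure_display) (Omega : measurableType d)
  (P : probability Omega R)
  (dV : measure_display) (TV : measurableType dV) (V : Omega -> TV)
  (K : nat) (hK : (0 < K)%N)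
  (X : 'I_K -> nat -> Omega -> R) (F : 'I_K -> R -> R)
  (U : (R -> R) -> R)
  (pstar : 'I_K -> R) (pistar : nat -> policy Omega K) (ppstar : policy Omega K)
  (* randomization variable and rewards are random variables *)
  (hV : measurable_fun setT V)
  (hX : forall i n, measurable_fun setT (X i n))
  (* V and all rewards are mutually independent *)
  (hindep : mutually_independent P
     (fun o : option ('I_K * nat) =>
        match o with None => sigmaRV V | Some (i, n) => sigmaRV (X i n) end))
  (* arm i has i.i.d. rewards with distribution function F^{(i)} *)
  (hF : forall i n (y : R), P (X i n @^-1` `]-oo, y]) = (F i y)%:E)
  (* p* maximizes U(F_p) over the simplex *)
  (hpstar : in_simplex pstar)
  (hpstar_max : forall p, in_simplex p -> U (Fmix F p) <= U (Fmix F pstar))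
  (* pi*(T) maximizes E[U(\hat F^pi_T)] over admissible policies *)
  (hpistar : forall T, (1 <= T)%N ->
     admissible V X (pistar T) /\
     forall pol, admissible V X pol ->
       Exp P (fun w => U (Fhat X pol T w)) <= Exp P (fun w => U (Fhat X (pistar T) T w)))
  (* pi_{p*}: i.i.d. sigma(V)-measurable actions with P(pi_t = i) = p*_i *)
  (hpp_meas : forall s, forall B : set 'I_K, sigmaRV V (ppstar s @^-1` B))
  (hpp_indep : mutually_independent P (fun s : nat => sigmaDisc (ppstar s)))
  (hpp_dist : forall s i, P (ppstar s @^-1` [set i]) = (pstar i)%:E)
  (* all expectations are finite *)
  (hint : forall pol T, admissible V X pol -> (1 <= T)%N ->
     P.-integrable setT (fun w => (U (Fhat X pol T w))%:E) /\
     P.-integrable setT (fun w => (U (Ftilde F pol T w))%:E))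
  (pol : policy Omega K) (T : nat) (hpol : admissible V X pol) (hT : (1 <= T)%N) :
  regret P X U pistar pol T - regret_tilde P F U pstar pol T
    <= GT P X F U pol T + GT P X F U (pistar T) T
  /\
  - (GT P X F U pol T + GT P X F U ppstar T + regret_tilde P F U pstar ppstar T)
    <= regret P X U pistar pol T - regret_tilde P F U pstar pol T.
Proof.
have [opt_adm opt_max] := hpistar T hT.
have pp_adm : admissible V X ppstar := admissible_of_sigmaV hpp_meas.
have Ftilde_le pl : admissible V X pl ->
    Exp P (fun w => U (Ftilde F pl T w)) <= U (Fmix F pstar).
  move=> pl_adm; apply: Exp_le_cst; first exact: (hint pl T pl_adm hT).2.
  by move=> w; exact: U_Ftilde_le_max.
have opt_ge_pp := opt_max _ pp_adm.
have opt_tilde := Ftilde_le _ opt_adm.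
have [pol_hat pol_tilde] := hint pol T hpol hT.
have [opt_hat opt_tilde_int] := hint _ T opt_adm hT.
have [pp_hat pp_tilde] := hint _ T pp_adm hT.
have cst_int := finite_measure_integrable_cst P (U (Fmix F pstar)) measurableT.
rewrite /regret /regret_tilde /GT !ExpB // !Exp_cst.
split; [exact: regret_gap_le opt_tilde|exact: regret_gap_ge opt_ge_pp].
Qed.
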